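(* Let $q$ be a prime power and $n=q^4-1$. (i) If $0\le a_2<q-1$, $0\le a_3<q$ and $a_2+a_3\ge q-1$, then the interlude $[(a_2,a_3,a_2,a_3),(a_2+1,a_3,a_2+1,a_3)]_M$ contains exactly $q^2-qa_3-a_2-1$ minimal representatives of SR-asymmetric cosets of cardinality $2$. (ii) If $0\le a_3\le q-2$, then the interlude $[(q-1,a_3,q-1,a_3),(0,a_3+1,0,a_3+1)]_M$ contains exactly $q^2-qa_3-(q-1)-1$ minimal representatives of SR-asymmetric cosets of cardinality $2$. Moreover, in both cases every cyclotomic coset generated by an element of the interlude is an SR-asymmetric coset.
   Context: Identify $\mathbb{Z}_n$ with $\{0,\ldots,n-1\}$, all arithmetic modulo $n$. The $q$-adic 4-tuple $(a_0,a_1,a_2,a_3)$ denotes $a_0+a_1q+a_2q^2+a_3q^3$ with $0\le a_i<q$. The cyclotomic coset of $x$ with respect to $q^2$ is $I_x=\{x,\,q^2x\bmod n\}$; its minimal representative is its least element. The (Hermitian) reciprocal coset of $I_x$ is $I_{n-qx}$. $I_x$ is symmetric if $I_{n-qx}=I_x$ and asymmetric otherwise; for an asymmetric pair with minimal representatives $x<y$, $I_x$ is FR-asymmetric and $I_y$ is SR-asymmetric. For $0\le a<q-1$, $0\le b<q$, the interlude $[(a,b,a,b),(a+1,b,a+1,b)]_M$ is the set of integers $x$ with $(a,b,a,b)<x<(a+1,b,a+1,b)$ that are minimal representatives of a coset of cardinality $2$; for $0\le b\le q-2$, $[(q-1,b,q-1,b),(0,b+1,0,b+1)]_M$ is the set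 of integers $x$ with $(q-1,b,q-1,b)<x<(0,b+1,0,b+1)$ and $x<q^2x\bmod n$. *)

From mathcomp Require Import all_boot all_order all_algebra.
Set Implicit Arguments. Unset Strict Implicit. Unset Printing Implicit Defensive.

(* Z_n identified with {0,...,n-1}; elements handled as nat, reduced mod n. *)

Definition prime_power (q : nat) : Prop :=
  exists p k : nat, prime p /\ 0 < k /\ q = p ^ k.

Definition nq (q : nat) : nat := q ^ 4 - 1.

Definition qad (q a0 a1 a2 a3 : nat) : nat :=
  a0 + a1 * q + a2 * q ^ 2 + a3 * q ^ 3.

Definition coset (q x : nat) : seq nat :=
  [:: x %% nq q; (q ^ 2 * x) %% nq q].

Definition card2 (q x : nat) : bool := x %% nq q != (q ^ 2 * x) %% nq q.

Definition minrep (q x : nat) : nat := minn (x %% nq q) ((q ^ 2 * x) %% nq q).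

Definition coset_eq (q x y : nat) : bool :=
  all (fun z => z \in coset q y) (coset q x) &&
  all (fun z => z \in coset q x) (coset q y).

(* generator of the reciprocal coset I_{n - q x} *)
Definition recip (q x : nat) : nat := (nq q - (q * x) %% nq q) %% nq q.

Definition symmetric_coset (q x : nat) : bool := coset_eq q (recip q x) x.

Definition SR_asym (q x : nat) : bool :=
  ~~ symmetric_coset q x && (minrep q (recip q x) < minrep q x).

Definition interlude1 (q a b x : nat) : bool :=
  [&& qad q a b a b < x, x < qad q a.+1 b a.+1 b,
      x == minrep q x & card2 q x].

Definition interlude2 (q b x : nat) : bool :=
  [&& qad q (q - 1) b (q - 1) b < x, x < qad q 0 b.+1 0 b.+1
    & x < (q ^ 2 * x) %% nq q].

From Pilot Require Import Defs.
From mathcomp Require Import all_boot all_order all_algebra.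
From mathcomp Require Import zify ring.

Set Implicit Arguments.
Unset Strict Implicit.
Unset Printing Implicit Defensive.

(* Write Q = q^2, so that n = Q^2 - 1.  Multiplying by Q swaps the two base-Q
   digits of x = u + v Q, and multiplying by q rotates its four base-q digits.
   Hence both interludes with upper digit w = (a2, a3) consist exactly of the
   numbers u + w Q with w < u < Q, and there are Q - w - 1 of them.  The
   reciprocal of such an x is the digitwise complement of the rotation of x,
   and a2 + a3 >= q - 1 forces one of its base-Q digits below w: the
   reciprocal coset then has the smaller minimal representative. *)

Lemma ltn_digits2 B u v c d : u < B -> c < B ->
  (u + v * B < c + d * B) = (v < d) || (v == d) && (u < c).
Proof.
move=> uB cB; case: (ltngtP v d) => [vd|vd|->] /=.
- by apply/idP; nia.
- by apply/negbTE; nia.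
- lia.
Qed.

Lemma ltn_digits2_sq B u v : u < B -> v < B -> u + v * B < B * B.
Proof. by move=> uB vB; nia. Qed.

Lemma ltn_digits2_top B u v : u < B -> v < B ->
  (u + v * B < B * B - 1) = (v < B - 1) || (u < B - 1).
Proof.
move=> uB vB; have -> : B * B - 1 = (B - 1) + (B - 1) * B by nia.
rewrite ltn_digits2; lia.
Qed.

Lemma modn_mul_rotate B M r d : d + B * r < B * M - 1 ->
  (B * (r + d * M)) %% (B * M - 1) = d + B * r.
Proof.
move=> small; have -> : B * (r + d * M) = d * (B * M - 1) + (d + B * r) by nia.
by rewrite modnMDl modn_small.
Qed.

Lemma qadE q a0 a1 a2 a3 :
  qad q a0 a1 a2 a3 = (a0 + a1 * q) + (a2 + a3 * q) * q ^ 2.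
Proof. by rewrite /qad; ring. Qed.

Lemma nq_sq q : nq q = q ^ 2 * q ^ 2 - 1.
Proof. by rewrite /nq -expnD. Qed.

Lemma sq_mul_mod_nq q u v : v + q ^ 2 * u < nq q ->
  (q ^ 2 * (u + v * q ^ 2)) %% nq q = v + u * q ^ 2.
Proof. by rewrite nq_sq => small; rewrite modn_mul_rotate // mulnC. Qed.

Lemma mul_qad_mod_nq q a0 a1 a2 a3 : qad q a3 a0 a1 a2 < nq q ->
  (q * qad q a0 a1 a2 a3) %% nq q = qad q a3 a0 a1 a2.
Proof.
have -> : qad q a3 a0 a1 a2 = a3 + q * (a0 + a1 * q + a2 * q ^ 2).
  by rewrite /qad; ring.
by rewrite /nq expnS; apply: modn_mul_rotate.
Qed.

Lemma qad_top q : qad q (q - 1) (q - 1) (q - 1) (q - 1) = nq q.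
Proof.
case: q => [//|p]; rewrite /qad /nq subn1 /=.
have -> : p.+1 ^ 4 = (p + p * p.+1 + p * p.+1 ^ 2 + p * p.+1 ^ 3).+1 by ring.
by rewrite subn1.
Qed.

Lemma qadD q a0 a1 a2 a3 b0 b1 b2 b3 :
  qad q a0 a1 a2 a3 + qad q b0 b1 b2 b3 = qad q (a0 + b0) (a1 + b1) (a2 + b2) (a3 + b3).
Proof. by rewrite /qad; ring. Qed.

Lemma nq_subn_qad q a0 a1 a2 a3 : a0 < q -> a1 < q -> a2 < q -> a3 < q ->
  nq q - qad q a0 a1 a2 a3 = qad q (q - 1 - a0) (q - 1 - a1) (q - 1 - a2) (q - 1 - a3).
Proof.
move=> a0q a1q a2q a3q.
have complK a : a < q -> q - 1 - a + a = q - 1 by lia.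
suff <- : qad q (q - 1 - a0) (q - 1 - a1) (q - 1 - a2) (q - 1 - a3) + qad q a0 a1 a2 a3 = nq q.
  by rewrite addnK.
by rewrite qadD !complK // qad_top.
Qed.

Lemma minrep_id q u v : v < u < q ^ 2 -> minrep q (u + v * q ^ 2) = u + v * q ^ 2.
Proof.
case/andP=> vu uQ; have vQ := ltn_trans vu uQ.
have xn : u + v * q ^ 2 < nq q by rewrite nq_sq ltn_digits2_top //; lia.
rewrite /minrep (modn_small xn) sq_mul_mod_nq; last first.
  by rewrite mulnC nq_sq ltn_digits2_top //; lia.
by apply/minn_idPl/ltnW; rewrite ltn_digits2 // vu.
Qed.

Lemma minrep_lt q u v c d : u < q ^ 2 -> v < q ^ 2 -> c < q ^ 2 -> d < q ^ 2 ->
  (v < d) || (u < d) -> minrep q (u + v * q ^ 2) < c + d * q ^ 2.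
Proof.
move=> uQ vQ cQ dQ /orP[vd | ud].
- apply: leq_ltn_trans (geq_minl _ _) _; apply: leq_ltn_trans (leq_mod _ _) _.
  by rewrite ltn_digits2 // vd.
- have small : v + q ^ 2 * u < nq q by rewrite mulnC nq_sq ltn_digits2_top //; lia.
  apply: leq_ltn_trans (geq_minr _ _) _; rewrite sq_mul_mod_nq //.
  by rewrite ltn_digits2 // ud.
Qed.

Lemma recip_qad q a0 a1 a2 a3 : a0 < q -> a1 < q -> a2 < q -> a3 < q ->
  0 < qad q a3 a0 a1 a2 < nq q ->
  recip q (qad q a0 a1 a2 a3) = qad q (q - 1 - a3) (q - 1 - a0) (q - 1 - a1) (q - 1 - a2).
Proof.
move=> a0q a1q a2q a3q /andP[pos small].
rewrite /recip mul_qad_mod_nq // modn_small; first exact: nq_subn_qad.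
lia.
Qed.

Lemma coset_eq_minrep_le q x y : coset_eq q x y -> minrep q y <= minrep q x.
Proof.
case/andP=> /allP sub_xy _.
have := sub_xy _ (mem_head _ _).
have : (q ^ 2 * x) %% nq q \in coset q y by apply: sub_xy; rewrite !inE eqxx orbT.
rewrite /minrep !inE; move: (_ %% nq q) (_ %% nq q) (_ %% nq q) (_ %% nq q) => ? ? ? ?.
lia.
Qed.

Lemma SR_asym_of_minrep_lt q x : minrep q (recip q x) < minrep q x -> SR_asym q x.
Proof.
move=> lt_min; rewrite /SR_asym lt_min andbT /symmetric_coset.
by apply/negP=> /coset_eq_minrep_le; rewrite leqNgt lt_min.
Qed.

Lemma SR_asym_qad q a b u0 u1 : a < q -> b < q -> u0 < q -> u1 < q ->
  q - 1 <= a + b -> a + b * q < u0 + u1 * q -> SR_asym q (qad q u0 u1 a b).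
Proof.
move=> aq bq u0q u1q ab wu; apply: SR_asym_of_minrep_lt.
have sqE : q ^ 2 = q * q by rewrite mulnn.
have digQ c d : c < q -> d < q -> c + d * q < q ^ 2 by rewrite sqE; apply: ltn_digits2_sq.
have subq c : q - 1 - c < q by lia.
have ab_top : (b < q - 1) || (a < q - 1).
  by rewrite -ltn_digits2_top //; have := digQ _ _ u0q u1q; rewrite sqE; lia.
rewrite recip_qad //; last first.
  apply/andP; split; first by rewrite qadE; nia.
  by rewrite qadE nq_sq ltn_digits2_top ?digQ // sqE !ltn_digits2_top //; lia.
rewrite [qad q u0 u1 a b]qadE minrep_id ?wu ?digQ // qadE.
(* The complement of (b, u0, u1, a) has base-q^2 digits (q-1-b, q-1-u0) and
   (q-1-u1, q-1-a); since a + b >= q - 1 one of them lies below (a, b). *)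
apply: minrep_lt; rewrite ?digQ //.
by move: wu; rewrite !ltn_digits2 //; lia.
Qed.

Lemma lt_swap_window Q w x : w.+1 < Q ->
  [&& w + w * Q < x, x < w.+1 + w.+1 * Q & x < (Q * x) %% (Q * Q - 1)]
  = (w * Q + w < x < w * Q + Q).
Proof.
move=> wQ; have [u [v [uQ ->]]] : exists u v, u < Q /\ x = u + v * Q.
  exists (x %% Q), (x %/ Q); split; first by rewrite ltn_mod; lia.
  by rewrite addnC -divn_eq.
have wQ' : w < Q by lia.
have Q0 : 0 < Q by lia.
rewrite [w * Q + w]addnC (_ : w * Q + Q = 0 + w.+1 * Q); last by rewrite mulSn addnC.
case: (ltnP (u + v * Q) (w.+1 + w.+1 * Q)) => [xhi | xhi] /=; last first.
  rewrite andbF; apply/esym/negbTE.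
  by rewrite negb_and -!leqNgt (leq_trans _ xhi) ?orbT // leq_add2r.
move: xhi; rewrite ltn_digits2 // => xhi.
rewrite modn_mul_rotate [Q * u]mulnC; last by rewrite ltn_digits2_top //; lia.
rewrite !ltn_digits2 //; lia.
Qed.

Lemma SR_asym_window q a b x : a < q -> b < q -> q - 1 <= a + b ->
  (a + b * q) * q ^ 2 + (a + b * q) < x < (a + b * q) * q ^ 2 + q ^ 2 ->
  SR_asym q x.
Proof.
move=> aq bq ab /andP[lo hi].
have [u -> /andP[wu uQ]] : exists2 u, x = u + (a + b * q) * q ^ 2 &
    a + b * q < u < q ^ 2 by exists (x - (a + b * q) * q ^ 2); lia.
rewrite (divn_eq u q) [_ + u %% q]addnC -qadE.
apply: SR_asym_qad; rewrite ?ltn_mod ?ltn_divLR -?divn_eq -?mulnn //; lia.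
Qed.

Lemma minrep_card2 q x : x < nq q ->
  (x == minrep q x) && Defs.card2 q x = (x < (q ^ 2 * x) %% nq q).
Proof.
rewrite /minrep /Defs.card2 => /modn_small ->; move: (_ %% nq q) => y.
by rewrite /minn; case: ltnP => xy; lia.
Qed.

Lemma interlude1E q a b : a.+1 < q -> b < q ->
  interlude1 q a b =1
  (fun x => (a + b * q) * q ^ 2 + (a + b * q) < x < (a + b * q) * q ^ 2 + q ^ 2).
Proof.
move=> aq bq x; have wQ : (a + b * q).+1 < q ^ 2 by rewrite -mulnn; nia.
rewrite /interlude1 !qadE addSn -lt_swap_window // -nq_sq.
apply: andb_id2l => _; apply: andb_id2l => xhi; apply: minrep_card2.
by rewrite nq_sq; move: (q ^ 2) wQ xhi => Q; nia.
Qed.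

Lemma interlude2E q b : b.+1 < q ->
  interlude2 q b =1
  (fun x => (q - 1 + b * q) * q ^ 2 + (q - 1 + b * q) < x < (q - 1 + b * q) * q ^ 2 + q ^ 2).
Proof.
move=> bq x; have wQ : (q - 1 + b * q).+1 < q ^ 2 by rewrite -mulnn; nia.
rewrite /interlude2 !qadE (_ : 0 + b.+1 * q = (q - 1 + b * q).+1); last lia.
by rewrite -lt_swap_window // -nq_sq.
Qed.

Lemma count_iota_between m n N :
  count (fun x => m < x < n) (iota 0 N) = minn N n - minn N m.+1.
Proof.
elim: N => [|N IH]; first by rewrite !min0n.
by rewrite -[N.+1]addn1 iotaD count_cat IH /=; lia.
Qed.

Lemma interlude_count_SR q a b (P : pred nat) : a < q -> b < q -> q - 1 <= a + b ->
  P =1 (fun x => (a + b * q) * q ^ 2 + (a + b * q) < x < (a + b * q) * q ^ 2 + q ^ 2) ->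
  count (fun x => P x && SR_asym q x) (iota 0 ((a + b * q).+1 + (a + b * q).+1 * q ^ 2))
    = q ^ 2 - (a + b * q).+1
  /\ (forall x, P x -> SR_asym q x).
Proof.
move=> aq bq ab Pwin.
have PSR x : P x -> SR_asym q x by rewrite Pwin; apply: SR_asym_window.
split=> //; rewrite (eq_count (a2 := P)); last by move=> x; apply/andb_idr/PSR.
rewrite (eq_count Pwin) count_iota_between.
by move: (a + b * q) (q ^ 2) => w Q; rewrite !(minn_idPr _); nia.
Qed.

Lemma prime_power_gt1 q : prime_power q -> 1 < q.
Proof.
by case=> p [k [p_pr [k_gt0 ->]]]; rewrite -(expn0 p) ltn_exp2l // prime_gt1.
Qed.

Theorem mainTheorem16 (q : nat) :
  prime_power q ->
  (forall a2 a3 : nat, a2 < q - 1 -> a3 < q -> q - 1 <= a2 + a3 ->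
     ((count (fun x => interlude1 q a2 a3 x && SR_asym q x)
         (iota 0 (qad q a2.+1 a3 a2.+1 a3)))%:Z
      = (q ^ 2)%:Z - (q * a3)%:Z - a2%:Z - 1)%R
     /\ (forall x : nat, interlude1 q a2 a3 x -> SR_asym q x))
  /\
  (forall a3 : nat, a3 <= q - 2 ->
     ((count (fun x => interlude2 q a3 x && SR_asym q x)
         (iota 0 (qad q 0 a3.+1 0 a3.+1)))%:Z
      = (q ^ 2)%:Z - (q * a3)%:Z - (q - 1)%:Z - 1)%R
     /\ (forall x : nat, interlude2 q a3 x -> SR_asym q x)).
Proof.
move=> /prime_power_gt1 q_gt1; split.
- move=> a b aq bq ab; have aq' : a.+1 < q by lia.
  rewrite qadE addSn.
  have [-> SR] := interlude_count_SR (ltnW aq') bq ab (interlude1E aq' bq).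
  split=> //; rewrite -mulnn; nia.
- move=> b bq; have bq' : b.+1 < q by lia.
  rewrite qadE (_ : 0 + b.+1 * q = (q - 1 + b * q).+1); last lia.
  have q1_lt_q : q - 1 < q by lia.
  have [-> SR] := interlude_count_SR q1_lt_q (ltnW bq') (leq_addr b _) (interlude2E bq').
  split=> //; rewrite -mulnn; nia.
Qed.
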